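(* Let $m$ be an odd prime, $\gamma_1,\gamma_2\in\mathbb Z$ and $n\in\mathbb Z^+$. Let $\underline a=(a_0,a_1,\dots)$ be an almost $m$-ary nearly perfect sequence of type $(\gamma_1,\gamma_2)$ and period $n+2$ with exactly two zero-symbols in each period, and suppose these are consecutive, i.e. $a_j=a_{j+1}=0$ for some $j$ (indices modulo $n+2$). Then $\underline a$ is symmetric: $a_x=a_{2j+1-x}$ for all $x$ (indices modulo $n+2$).
   Context: Let $\zeta_m\in\mathbb C$ be a primitive $m$-th root of unity. A sequence $\underline a=(a_0,a_1,\dots)$ of period $N$ is an almost $m$-ary sequence with $s$ zero-symbols if in each period exactly $s$ entries are $0$ and every other entry is of the form $\zeta_m^{b}$ for some integer $b$. Its autocorrelation function is $C_{\underline a}(t)=\sum_{i=0}^{N-1}a_i\overline{a_{i+t}}$ (indices modulo $N$, bar = complex conjugation). $\underline a$ is a nearly perfect sequence (NPS) of type $(\gamma_1,\gamma_2)$ if every out-of-phase autocorrelation coefficient $C_{\underline a}(t)$, $1\le t\le N-1$, equals $\gamma_1$ or $\gamma_2$. *)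

From HB Require Import structures.
From mathcomp Require Import all_boot all_order all_algebra all_field.
Set Implicit Arguments. Unset Strict Implicit. Unset Printing Implicit Defensive.
Import Order.TTheory GRing.Theory Num.Theory.
Local Open Scope ring_scope.

(* Sequences are a : nat -> algC (algC = algebraic complex numbers, a model of C
   containing all roots of unity), assumed N-periodic. *)
Definition periodic (N : nat) (a : nat -> algC) : Prop := forall i, a (i + N)%N = a i.

Definition autocorr (N : nat) (a : nat -> algC) (t : nat) : algC :=
  \sum_(i < N) a i * (a (i + t)%N)^*.

Definition almost_mary (m : nat) (zeta : algC) (N s : nat) (a : nat -> algC) : Prop :=
  #|[set i : 'I_N | a i == 0]| = s /\
  forall i : 'I_N, a i != 0 -> exists b : nat, a i = zeta ^+ b.

Definition nearly_perfect (N : nat) (a : nat -> algC) (g1 g2 : int) : Prop :=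
  forall t : nat, (1 <= t <= N.-1)%N -> autocorr N a t = g1%:~R \/ autocorr N a t = g2%:~R.

(* Write every nonzero entry as a_i = zeta^(e_i) and put e_i = 0 on the two zeros.
   Since the minimal polynomial of zeta over Q is 1 + X + ... + X^(m-1), a sum of
   powers of zeta is rational only if all nonzero residues mod m occur equally often
   among the exponents; as m is odd this forces the exponents to sum to 0 mod m.
   Applied to C(t) = sum_i zeta^(e_i - e_(i+t)), and compared with the shift-invariant
   total sum_i e_i, this yields
     e_(j-t) + e_(j+1-t) = e_(j+t) + e_(j+1+t)  (mod m)   for all t.
   Starting from e_j = e_(j+1) = 0, induction on s gives e_(j+1+s) = e_(j-s) (mod m),
   and the zero pattern is symmetric too, hence a_(j+1+s) = a_(j-s). *)

From HB Require Import structures.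
From mathcomp Require Import all_boot all_order all_algebra all_field.
From mathcomp Require Import ring.
Set Implicit Arguments. Unset Strict Implicit. Unset Printing Implicit Defensive.
Import Order.TTheory GRing.Theory Num.Theory.
Local Open Scope ring_scope.

Local Notation pQtoC := (map_poly (@ratr algC)).

Lemma modnD_cancel (m a b c d : nat) :
  (a + b = c + d %[mod m])%N -> (b = c %[mod m])%N -> (a = d %[mod m])%N.
Proof.
move=> eq_abcd eq_bc; apply/eqP.
by rewrite -(eqn_modDr c) [(d + c)%N]addnC -eq_abcd -modnDmr -eq_bc modnDmr.
Qed.

Lemma big_pred2 (R : Type) (idx : R) (op : Monoid.com_law idx) (I : finType)
    (a b : I) (F : I -> R) :
  a != b -> \big[op/idx]_(i | (i == a) || (i == b)) F i = op (F a) (F b).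
Proof.
move=> neq_ab; rewrite (bigD1 a) ?eqxx //= (big_pred1 b) // => i /=.
by rewrite orbC andb_orl andbN orbF andb_idr // => /eqP ->; rewrite eq_sym.
Qed.

Section PrimeRootOfUnity.

Variables (m : nat) (z : algC).
Hypotheses (m_prime : prime m) (z_prim : m.-primitive_root z).

Let m_gt0 : (0 < m)%N := prime_gt0 m_prime.
Let m_gt1 : (1 < m)%N := prime_gt1 m_prime.

Lemma sum_prim_root_expr : \sum_(i < m) z ^+ i = 0.
Proof.
have /eqP := prim_expr_order z_prim; rewrite -subr_eq0 subrX1 mulf_eq0.
case/orP => [|/eqP //]; rewrite subr_eq0 => /eqP z1.
have := prim_order_dvd z_prim 1; rewrite z1 expr1 eqxx dvdn1 => /eqP m1.
by move: m_gt1; rewrite m1.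
Qed.

Lemma root_ratpoly_prim_prime (p : {poly rat}) :
  root (pQtoC p) z = (\poly_(i < m) 1 %| p).
Proof.
have [q [Dq q_monic] dvd_q] := minCpolyP z; rewrite dvd_q; congr (_ %| p).
set u := \poly_(i < m) 1.
have u_monic : u \is monic by rewrite monicE lead_coef_poly ?oner_neq0.
have size_u : size u = m by rewrite size_poly_eq ?oner_neq0.
have size_q : size q = m.
  rewrite -(size_map_poly (@ratr algC)) -Dq (minCpoly_cyclotomic z_prim).
  by rewrite size_cyclotomic totient_prime // prednK.
have root_u : root (pQtoC u) z.
  rewrite /root (@horner_coef_wide _ m) ?size_map_poly ?size_u //.
  rewrite -[X in _ == X]sum_prim_root_expr; apply/eqP/eq_bigr => i _.
  by rewrite coef_map coef_poly ltn_ord /= rmorph1 mul1r.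
by apply/eqP; rewrite -eqp_monic // -dvdp_size_eqp ?size_q ?size_u // -dvd_q.
Qed.

Lemma coef_ratpoly_prim_prime (p : {poly rat}) :
  (size p <= m)%N -> root (pQtoC p) z -> forall i, (i < m)%N -> p`_i = p`_0.
Proof.
rewrite root_ratpoly_prim_prime => size_p /divpK Dp i lt_im.
set u := \poly_(i < m) 1 in Dp.
have u_neq0 : u != 0 by rewrite -size_poly_eq0 size_poly_eq ?oner_neq0 // -lt0n.
have /size1_polyC Dc : (size (p %/ u)%R <= 1)%N.
  by rewrite size_divp // size_poly_eq ?oner_neq0 // leq_subLR addn1 prednK.
by rewrite -Dp Dc !coefCM !coef_poly lt_im m_gt0.
Qed.

Lemma prim_prime_count_const (c : nat -> nat) :
  \sum_(r < m) (c r)%:R * z ^+ r \in Crat -> forall r, (0 < r < m)%N -> c r = c 1%N.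
Proof.
case/CratP => q Dq r /andP[r_gt0 r_ltm].
pose p : {poly rat} := \poly_(i < m) (c i)%:R - q%:P.
have size_p : (size p <= m)%N.
  rewrite (leq_trans (size_polyD _ _)) // geq_max size_poly size_polyN size_polyC.
  exact: leq_trans (leq_b1 _) m_gt0.
have root_p : root (pQtoC p) z.
  rewrite /root rmorphB /= map_polyC hornerD hornerN hornerC subr_eq0.
  apply/eqP/(etrans _ Dq).
  rewrite (@horner_coef_wide _ m) ?size_map_poly ?size_poly //.
  by apply: eq_bigr => i _; rewrite coef_map coef_poly ltn_ord /= rmorph_nat.
have coef_p i : (0 < i < m)%N -> p`_i = (c i)%:R.
  by case/andP=> i_gt0 i_ltm; rewrite coefB coef_poly coefC i_ltm gtn_eqF ?subr0.
have := coef_ratpoly_prim_prime size_p root_p r_ltm.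
rewrite -(coef_ratpoly_prim_prime size_p root_p m_gt1) !coef_p ?r_gt0 ?r_ltm //.
by move/eqP; rewrite eqr_nat => /eqP.
Qed.

Lemma conjC_prim_expr b : (z ^+ b)^* = z ^+ (m.-1 * b).
Proof.
have w_neq0 : z ^+ b != 0 by rewrite expf_neq0 // (prim_root_eq0 z_prim) -lt0n.
have w_norm : `|z ^+ b| = 1.
  apply/eqP; rewrite -(pexpr_eq1 m_gt0 (normr_ge0 _)) -normrX.
  by rewrite exprAC (prim_expr_order z_prim) expr1n normr1.
apply: (mulfI w_neq0); rewrite -normCK w_norm expr1n -exprD -mulSn prednK //.
by rewrite exprM (prim_expr_order z_prim) expr1n.
Qed.

Hypothesis m_odd : odd m.

(* Grouping the exponents by residue, rationality makes every nonzero residue equally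
   frequent, and sum_(r < m) r = m (m - 1) / 2 = 0 mod m as m is odd. *)
Lemma prim_prime_expn_sum_Crat (I : finType) (P : pred I) (e : I -> nat) :
  \sum_(i | P i) z ^+ e i \in Crat -> (\sum_(i | P i) e i = 0 %[mod m])%N.
Proof.
pose res i : 'I_m := Ordinal (ltn_pmod (e i) m_gt0).
pose c r := #|[pred i | P i && (e i %% m == r)%N]|.
have sum_expr : \sum_(i | P i) z ^+ e i = \sum_(r < m) (c r)%:R * z ^+ r.
  rewrite (partition_big res xpredT) //=; apply: eq_bigr => r _.
  rewrite (eq_bigr (fun _ => z ^+ r)); last first.
    by move=> i /andP[_ /eqP <-]; rewrite /= prim_expr_mod.
  by rewrite sumr_const mulr_natl.
have sum_e : (\sum_(i | P i) e i = \sum_(r < m) c r * r %[mod m])%N.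
  rewrite -modn_summ (partition_big res xpredT) //=; congr (_ %% m)%N.
  apply: eq_bigr => r _; rewrite (eq_bigr (fun _ => nat_of_ord r)) ?sum_nat_const //.
  by move=> i /andP[_ /eqP <-].
rewrite sum_expr => /prim_prime_count_const c_const; rewrite sum_e.
rewrite (eq_bigr (fun r : 'I_m => c 1%N * r)%N); last first.
  move=> r _; case: (posnP r) => [-> | r_gt0]; first by rewrite !muln0.
  by rewrite c_const // r_gt0 ltn_ord.
rewrite -big_distrr /= -(big_mkord xpredT (fun i => i)) bin2_sum bin2odd //.
by rewrite mulnCA modnMr mod0n.
Qed.

Lemma prim_prime_expn_conj_sum_Crat (I : finType) (P : pred I) (e e' : I -> nat) :
  \sum_(i | P i) z ^+ e i * (z ^+ e' i)^* \in Crat ->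
  (\sum_(i | P i) e i = \sum_(i | P i) e' i %[mod m])%N.
Proof.
have -> : \sum_(i | P i) z ^+ e i * (z ^+ e' i)^* =
           \sum_(i | P i) z ^+ (e i + m.-1 * e' i).
  by apply: eq_bigr => i _; rewrite conjC_prim_expr exprD.
move/prim_prime_expn_sum_Crat; rewrite big_split /= -big_distrr /= => sum0.
apply/eqP; rewrite -(eqn_modDr (m.-1 * \sum_(i | P i) e' i)) sum0.
by rewrite -mulSn prednK // modnMr mod0n.
Qed.

End PrimeRootOfUnity.

Definition cyc_autocorr {G : finZmodType} (f : G -> algC) (t : G) : algC :=
  \sum_i f i * (f (i + t))^*.

Section CyclicAutocorrelation.

Variables (G : finZmodType) (m : nat) (z : algC) (f : G -> algC) (e : G -> nat).
Hypotheses (m_prime : prime m) (z_prim : m.-primitive_root z) (m_odd : odd m).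
Hypothesis f_expn : forall i, f i != 0 -> f i = z ^+ e i.
Hypothesis e_zero : forall i, f i = 0 -> e i = 0%N.

(* Rationality of the correlation gives sum_P e i = sum_P e (i + t) over the pairs P of
   nonzero entries; adding the complementary sums (where e vanishes on zero entries)
   gives the same shift-invariant total sum_i e i on both sides. *)
Lemma autocorr_expn_congr t : cyc_autocorr f t \in Crat ->
  (\sum_(i | f (i + t)%R == 0%R) e i = \sum_(i | f i == 0%R) e (i + t)%R %[mod m])%N.
Proof.
pose P i := (f i != 0) && (f (i + t) != 0).
have corrE : cyc_autocorr f t = \sum_(i | P i) z ^+ e i * (z ^+ e (i + t))^*.
  rewrite /cyc_autocorr (bigID P) /= addrC big1 ?add0r => [|i]; last first.
    by rewrite negb_and !negbK => /orP[] /eqP ->; rewrite ?conjC0 ?mul0r ?mulr0.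
  by apply: eq_bigr => i /andP[/f_expn <- /f_expn <-].
rewrite corrE => /(prim_prime_expn_conj_sum_Crat m_prime z_prim m_odd) eq_P.
have sum_e : (\sum_i e i = \sum_(i | f (i + t)%R == 0%R) e i + \sum_(i | P i) e i)%N.
  rewrite (bigID (fun i => f (i + t) == 0)) /=; congr (_ + _)%N.
  rewrite (bigID (fun i => f i == 0)) /= big1 => [|i /andP[_ /eqP /e_zero] //].
  by apply: eq_bigl => i; rewrite /P andbC.
have sum_et : (\sum_i e i = \sum_(i | P i) e (i + t)%R + \sum_(i | f i == 0%R) e (i + t)%R)%N.
  rewrite (reindex_inj (addIr t)) (bigID (fun i => f i == 0)) addnC /=.
  congr (_ + _)%N.
  rewrite (bigID (fun i => f (i + t) == 0)) /= big1 => [|i /andP[_ /eqP /e_zero] //].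
  by rewrite add0n.
by apply: modnD_cancel eq_P; rewrite -sum_e sum_et.
Qed.

Variables (j g : G).
Hypothesis g_neq0 : g != 0.
Hypothesis f_zero : forall i, (f i == 0) = (i == j) || (i == j + g).
Hypothesis f_autocorr : forall t, t != 0 -> cyc_autocorr f t \in Crat.

Lemma zero_pair_expn_congr t :
  (e (j - t)%R + e (j + g - t)%R = e (j + t)%R + e (j + g + t)%R %[mod m])%N.
Proof.
have [-> | t_neq0] := eqVneq t 0; first by rewrite !subr0 !addr0.
have neq_jg : j != j + g.
  by rewrite -{1}[j]addr0 (inj_eq (addrI j)) eq_sym.
have := autocorr_expn_congr (f_autocorr t_neq0).
rewrite (eq_bigl _ _ f_zero) (eq_bigl (fun i => (i == j - t) || (i == j + g - t))).
  by rewrite !big_pred2 // (inj_eq (addIr _)).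
by move=> i; rewrite f_zero !(canF_eq (addrK t)).
Qed.

Lemma zero_pair_reflect_expn s :
  (e (j + g + g *+ s)%R = e (j - g *+ s)%R %[mod m])%N.
Proof.
elim: s => [|s IHs].
  by rewrite !mulr0n addr0 subr0 !e_zero //; apply/eqP; rewrite f_zero eqxx ?orbT.
have := zero_pair_expn_congr (g *+ s.+1); rewrite !mulrS.
have -> : j + g - (g + g *+ s) = j - g *+ s by rewrite opprD addrA addrK.
rewrite [j + (g + _)]addrA => eq_shift.
exact/esym/(modnD_cancel eq_shift (esym IHs)).
Qed.

Lemma zero_pair_reflect s : f (j + g + g *+ s) = f (j - g *+ s).
Proof.
have zero_sym : (f (j + g + g *+ s) == 0) = (f (j - g *+ s) == 0).
  have eq_j : (j + g + g *+ s == j) = (j - g *+ s == j + g).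
    by rewrite -addrA -{2}[j]addr0 !(inj_eq (addrI j)) addr_eq0 eq_sym.
  have eq_jg : (j + g + g *+ s == j + g) = (j - g *+ s == j).
    by rewrite -{2}[j + g]addr0 (inj_eq (addrI _)) -{2}[j]addr0 (inj_eq (addrI j)) oppr_eq0.
  by rewrite !f_zero eq_j eq_jg orbC.
have [fz | fz_neq0] := eqVneq (f (j + g + g *+ s)) 0.
  by rewrite fz; apply/esym/eqP; rewrite -zero_sym fz.
have fz'_neq0 : f (j - g *+ s) != 0 by rewrite -zero_sym.
rewrite (f_expn fz_neq0) (f_expn fz'_neq0) -(prim_expr_mod z_prim).
by rewrite zero_pair_reflect_expn prim_expr_mod.
Qed.

End CyclicAutocorrelation.

Definition root_log (m : nat) (z w : algC) : nat :=
  if [pick b : 'I_m | w == z ^+ b] is Some b then val b else 0%N.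

Lemma root_logK m z w :
  m.-primitive_root z -> (exists b, w = z ^+ b) -> w = z ^+ root_log m z w.
Proof.
move=> z_prim [b ->]; rewrite /root_log; case: pickP => [c /eqP // | no_log].
have := no_log (Ordinal (ltn_pmod b (prim_order_gt0 z_prim))).
by rewrite /= prim_expr_mod ?eqxx.
Qed.

Lemma root_log0 m z : m.-primitive_root z -> root_log m z 0 = 0%N.
Proof.
move=> z_prim; have z_neq0 : z != 0.
  by rewrite (prim_root_eq0 z_prim) -lt0n (prim_order_gt0 z_prim).
rewrite /root_log; case: pickP => // b /eqP /esym /eqP.
by rewrite expf_eq0 (negbTE z_neq0) andbF.
Qed.

Definition seq_Zp (n : nat) (a : nat -> algC) (i : 'I_n.+2) : algC := a i.

Section PeriodicSequence.

Variables (n : nat) (a : nat -> algC).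
Hypothesis a_periodic : periodic n.+2 a.

Lemma periodic_modn x : a (x %% n.+2) = a x.
Proof.
rewrite [in RHS](divn_eq x n.+2); elim: (x %/ n.+2)%N => [|k IHk].
  by rewrite mul0n add0n.
by rewrite mulSn -addnA addnC a_periodic.
Qed.

Lemma seq_Zp_nat x : seq_Zp a (x%:R : 'I_n.+2) = a x.
Proof. by rewrite /seq_Zp Zp_nat /= periodic_modn. Qed.

Lemma autocorr_seq_Zp t :
  autocorr n.+2 a t = cyc_autocorr (seq_Zp a) (t%:R : 'I_n.+2).
Proof. by apply: eq_bigr => i _; rewrite -[a (i + t)%N]seq_Zp_nat natrD natr_Zp. Qed.

Lemma nearly_perfect_autocorr_Crat g1 g2 : nearly_perfect n.+2 a g1 g2 ->
  forall t : 'I_n.+2, t != 0 -> cyc_autocorr (seq_Zp a) t \in Crat.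
Proof.
move=> a_nps t t_neq0; rewrite -[t]natr_Zp -autocorr_seq_Zp.
have : (1 <= t <= n.+1)%N by rewrite -[(t <= n.+1)%N]ltnS ltn_ord andbT lt0n.
by case/a_nps => ->; apply: rpred_int.
Qed.

Lemma seq_Zp_zero_pair j : #|[set i : 'I_n.+2 | a i == 0]| = 2 ->
    a j = 0 -> a j.+1 = 0 ->
  forall i : 'I_n.+2, (seq_Zp a i == 0) = (i == j%:R) || (i == j%:R + 1).
Proof.
move=> card_zero aj0 aj10 i.
have neq_j : j%:R != j%:R + 1 :> 'I_n.+2.
  by rewrite -{1}[j%:R]addr0 (inj_eq (addrI _)) eq_sym oner_eq0.
have zeros : [set k : 'I_n.+2 | seq_Zp a k == 0] = [set j%:R; j%:R + 1].
  apply/esym/eqP; rewrite eqEcard cards2 neq_j card_zero leqnn andbT.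
  apply/subsetP => k; rewrite !inE => /orP[] /eqP ->.
    by rewrite seq_Zp_nat aj0.
  by rewrite natr1 seq_Zp_nat aj10.
by have := congr1 (fun A : {set 'I_n.+2} => i \in A) zeros; rewrite !inE.
Qed.

End PeriodicSequence.

Theorem corollary1 (m : nat) (zeta : algC) (g1 g2 : int) (n : nat)
  (a : nat -> algC) (j : nat) :
  prime m -> odd m -> m.-primitive_root zeta -> (0 < n)%N ->
  periodic (n.+2) a ->
  almost_mary m zeta (n.+2) 2 a ->
  nearly_perfect (n.+2) a g1 g2 ->
  a j = 0 -> a j.+1 = 0 ->
  forall x y : nat, x + y = (2 * j).+1 %[mod n.+2] -> a x = a y.
Proof.
move=> m_prime m_odd zeta_prim _ a_per [card_zero a_expn] a_nps aj0 aj10 x y eq_xy.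
pose f := seq_Zp (n:=n) a; pose e i := root_log m zeta (f i).
have f_expn i : f i != 0 -> f i = zeta ^+ e i.
  by move=> fi_neq0; apply/root_logK/a_expn.
have e_zero i : f i = 0 -> e i = 0%N by rewrite /e => ->; apply: root_log0.
have f_reflect := zero_pair_reflect m_prime zeta_prim m_odd f_expn e_zero (oner_neq0 _)
  (seq_Zp_zero_pair a_per card_zero aj0 aj10) (nearly_perfect_autocorr_Crat a_per a_nps).
have eq_xy_Zp : x%:R + y%:R = (2 * j).+1%:R :> 'I_n.+2.
  by rewrite -natrD !Zp_nat; apply: val_inj.
have := f_reflect (val (x%:R - (j%:R + 1) : 'I_n.+2)); rewrite natr_Zp.
have -> : j%:R - (x%:R - (j%:R + 1)) = y%:R :> 'I_n.+2.
  by apply: (addrI x%:R); rewrite eq_xy_Zp; ring.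
by rewrite addrC subrK /f !(seq_Zp_nat a_per).
Qed.
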